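(* Let $(\Omega,\mathcal{F})$ be a measurable space, $\mathcal{P}$ a nonempty set of probability measures on it, $\hat{\mathbb{E}}[Z]=\sup_{P\in\mathcal{P}}E_P[Z]$, and let $X,Y$ be random variables with $\hat{\mathbb{E}}[X^2]+\hat{\mathbb{E}}[Y^2]<\infty$. Put $U=\frac{X+Y}{2}$ and $V=\frac{X-Y}{2}$. Then (i) $\overline{C}(X,Y)=\max_{\beta\in\mathbb{R}}\min_{\alpha\in\mathbb{R}}\hat{\mathbb{E}}[(U-\alpha)^2-(V-\beta)^2]$, and there exist $\alpha^*\in M_U$, $\beta^*\in M_V$ such that $\overline{C}(X,Y)=\hat{\mathbb{E}}[(U-\alpha^* )^2-(V-\beta^* )^2]$; (ii) $\underline{C}(X,Y)=\min_{\alpha\in\mathbb{R}}\max_{\beta\in\mathbb{R}}\left(-\hat{\mathbb{E}}[-(U-\alpha)^2+(V-\beta)^2]\right)$, and there exist $\alpha^*\in M_U$, $\beta^*\in M_V$ such that $\underline{C}(X,Y)=-\hat{\mathbb{E}}[-(U-\alpha^* )^2+(V-\beta^* )^2]$.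
   Context: For a random variable $W$ with $\hat{\mathbb{E}}[W^2]<\infty$: $\overline{\mu}_W=\hat{\mathbb{E}}[W]$, $\underline{\mu}_W=-\hat{\mathbb{E}}[-W]$, $M_W=[\underline{\mu}_W,\overline{\mu}_W]$. Upper covariance $\overline{C}(X,Y)=\max_{\mu_2\in M_Y}\min_{\mu_1\in M_X}\hat{\mathbb{E}}[(X-\mu_1)(Y-\mu_2)]$; lower covariance $\underline{C}(X,Y)=\min_{\mu_2\in M_Y}\max_{\mu_1\in M_X}\left(-\hat{\mathbb{E}}[-(X-\mu_1)(Y-\mu_2)]\right)$. *)

From HB Require Import structures.
From mathcomp Require Import all_boot all_order all_algebra.
From mathcomp Require Import all_classical all_reals all_analysis.
Set Implicit Arguments. Unset Strict Implicit. Unset Printing Implicit Defensive.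
Import Order.TTheory GRing.Theory Num.Theory.
Local Open Scope classical_set_scope.
Local Open Scope ring_scope.

Definition sublinE d (T : measurableType d) (R : realType)
  (Ps : set (probability T R)) (Z : T -> R) : \bar R :=
  ereal_sup [set 'E_P[Z]%E | P in Ps].

(* upper mean  \overline{mu}_W = \hat E[W]  (real; finite under the standing hypotheses) *)
Definition upmean d (T : measurableType d) (R : realType)
  (Ps : set (probability T R)) (W : T -> R) : R :=
  fine (sublinE Ps W).

Definition lowmean d (T : measurableType d) (R : realType)
  (Ps : set (probability T R)) (W : T -> R) : R :=
  - fine (sublinE Ps (fun w => - W w)).

Definition meanset d (T : measurableType d) (R : realType)
  (Ps : set (probability T R)) (W : T -> R) : set R :=
  `[lowmean Ps W, upmean Ps W].

Definition upcov d (T : measurableType d) (R : realType)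
  (Ps : set (probability T R)) (X Y : T -> R) : \bar R :=
  ereal_sup [set ereal_inf [set sublinE Ps (fun w => (X w - m1) * (Y w - m2))
                           | m1 in meanset Ps X]
            | m2 in meanset Ps Y].

Definition lowcov d (T : measurableType d) (R : realType)
  (Ps : set (probability T R)) (X Y : T -> R) : \bar R :=
  ereal_inf [set ereal_sup [set (- sublinE Ps (fun w => (- ((X w - m1) * (Y w - m2)))%R))%E
                           | m1 in meanset Ps X]
            | m2 in meanset Ps Y].

From HB Require Import structures.
From mathcomp Require Import all_boot all_order all_algebra.
From mathcomp Require Import all_classical all_reals all_analysis.
From mathcomp Require Import ring lra.
From mathcomp Require Import measurable_realfun.
Import Order.TTheory GRing.Theory Num.Theory.
Import numFieldNormedType.Exports.
Local Open Scope classical_set_scope.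
Local Open Scope ring_scope.

(* Write c_P, x_P, y_P for E_P[XY], E_P[X], E_P[Y]. Finite second moments make
   these bounded in P, and E_P[(X - m1)(Y - m2)] = c_P - m2 x_P - m1 y_P + m1 m2,
   while (U - a)^2 - (V - b)^2 = (X - (a + b))(Y - (a - b)). So both min-max
   values in (i) are problems about the bounded family (c_P, x_P, y_P), and both
   equal the supremum S of the covariances c - x y of the two-point mixtures of
   the family. Evaluating at the mean of a mixture gives the lower bounds. For
   the upper bounds, fix the outer variable: the inner points where a given
   E_P[...] is at most S form an interval, two such intervals always meet
   (otherwise some mixture of the two measures would have covariance above S),
   and the one-dimensional Helly theorem yields a common point, which can be
   taken in M_X, resp. M_U. The outer maximum over b is attained on M_V since
   the inner minimum is continuous in b. Part (ii) is part (i) for (-X, Y). *)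

Section image_bounds.
Context {R : realType} {I : Type} {J : set I} {f : I -> R} {M : R}.

Lemma le_sup_image i : (forall k, J k -> f k <= M) -> J i -> f i <= sup (f @` J).
Proof.
by move=> fM Ji; apply: ub_le_sup; [exists M => _ [k Jk <-]; exact: fM | exists i].
Qed.

Lemma sup_image_le : J !=set0 -> (forall k, J k -> f k <= M) -> sup (f @` J) <= M.
Proof.
by move=> [i Ji] fM; apply: ge_sup => [|_ [k Jk <-]]; [exists (f i), i | exact: fM].
Qed.

Lemma inf_image_le i : (forall k, J k -> M <= f k) -> J i -> inf (f @` J) <= f i.
Proof.
by move=> fM Ji; apply: ge_inf; [exists M => _ [k Jk <-]; exact: fM | exists i].
Qed.

Lemma le_inf_image : J !=set0 -> (forall k, J k -> M <= f k) -> M <= inf (f @` J).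
Proof.
by move=> [i Ji] fM; apply: lb_le_inf => [|_ [k Jk <-]]; [exists (f i), i | exact: fM].
Qed.

End image_bounds.

Lemma helly_interval {R : realType} {I : Type} (J : set I) (lo hi : I -> R) (L H : R) :
  L <= H -> (forall i, J i -> lo i <= H) -> (forall i, J i -> L <= hi i) ->
  (forall i j, J i -> J j -> lo i <= hi j) ->
  exists2 a, L <= a <= H & forall i, J i -> lo i <= a <= hi i.
Proof.
move=> LH loH Lhi lohi.
pose E := [set L] `|` lo @` J.
have E0 : E !=set0 by exists L; left.
have EH : ubound E H by move=> r [->|[i Ji <-]] //; exact: loH.
have hE : has_ubound E by exists H.
exists (sup E).
  by apply/andP; split; [apply: ub_le_sup => //; left | exact: ge_sup].
move=> i Ji; apply/andP; split; first by apply: ub_le_sup => //; right; exists i.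
by apply: ge_sup => // r [->|[k Jk <-]]; [exact: Lhi | exact: lohi].
Qed.

Lemma saddle_identity {R : numFieldType} (p s a b : R) :
  (p - (a + b)) * (s - (a - b)) = ((p + s) / 2 - a) ^+ 2 - ((p - s) / 2 - b) ^+ 2.
Proof. by field. Qed.

Lemma ler_norm_mix {R : realType} {a b B l : R} :
  `|a| <= B -> `|b| <= B -> 0 <= l <= 1 -> `|l * a + (1 - l) * b| <= B.
Proof.
rewrite !ler_norml => /andP[? ?] /andP[? ?] /andP[? ?]; apply/andP; split; nra.
Qed.

Lemma ltr_mix {R : realType} {a b S l : R} :
  0 <= l <= 1 -> S < a -> S < b -> S < l * a + (1 - l) * b.
Proof.
move=> /andP[l0 l1] Sa Sb; have [l_lt1|l_ge1] := ltrP l 1; first nra.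
have -> : l = 1 by apply/le_anti/andP.
by rewrite mul1r subrr mul0r addr0.
Qed.

Lemma lipschitz_bound_continuous_at {R : realType} (f K : R -> R) b0 :
  (forall t, `|f t - f b0| <= `|t - b0| * K t) -> {for b0, continuous K} ->
  {for b0, continuous f}.
Proof.
move=> fK cK.
have : (fun t => `|t - b0| * K t) @ b0 --> 0 * K b0.
  apply: cvgM cK; rewrite -[X in _ --> X](@normr0 R R) -(subrr b0).
  by apply: cvg_norm; apply: cvgB; [exact: cvg_id | exact: cvg_cst].
rewrite mul0r => /cvgrPdist_le cvg0; apply/cvgrPdist_le => e e0.
apply: filterS (cvg0 e e0) => t; rewrite sub0r normrN => h.
by rewrite distrC; exact: le_trans (fK t) (le_trans (ler_norm _) h).
Qed.

Section mixture_minimax.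
Context {R : realType} {I : Type} (J : set I) (c x y : I -> R).

(* [c i], [x i], [y i] stand for E_i[XY], E_i[X], E_i[Y]: then [cross_moment i m1 m2]
   is E_i[(X - m1)(Y - m2)], and [mixture_cov i j l] is the covariance of X and Y
   under the mixture l P_i + (1 - l) P_j. *)
Definition cross_moment i m1 m2 := c i - m2 * x i - m1 * y i + m1 * m2.

Definition upper_cross_moment m1 m2 := sup [set cross_moment i m1 m2 | i in J].

Definition mean_itv (f : I -> R) := `[inf (f @` J), sup (f @` J)]%classic.

Definition mixture_cov i j l :=
  (l * c i + (1 - l) * c j) - (l * x i + (1 - l) * x j) * (l * y i + (1 - l) * y j).

Definition mixture_covs :=
  [set z | exists i j l, [/\ J i, J j, 0 <= l <= 1 & mixture_cov i j l = z]].

Definition upper_value := ereal_sup [set ereal_inf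
  [set (upper_cross_moment m1 m2)%:E | m1 in mean_itv x] | m2 in mean_itv y].

Definition saddle_inf b := inf [set upper_cross_moment (a + b) (a - b) | a in [set: R]].

Definition saddle_value := ereal_sup [set ereal_inf
  [set (upper_cross_moment (a + b) (a - b))%:E | a in [set: R]] | b in [set: R]].

Lemma cross_moment_mix i j l m1 m2 :
  l * cross_moment i m1 m2 + (1 - l) * cross_moment j m1 m2 = mixture_cov i j l +
    (l * x i + (1 - l) * x j - m1) * (l * y i + (1 - l) * y j - m2).
Proof. by rewrite /cross_moment /mixture_cov; ring. Qed.

Lemma cross_moment_saddle k a b : cross_moment k (a + b) (a - b) =
  c k - x k * y k + ((x k + y k) / 2 - a) ^+ 2 - ((x k - y k) / 2 - b) ^+ 2.
Proof. by rewrite /cross_moment; field. Qed.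

Lemma mixture_cov_diag i : mixture_cov i i 1 = c i - x i * y i.
Proof. by rewrite /mixture_cov; ring. Qed.

Variable B : R.
Hypothesis J0 : J !=set0.
Hypothesis moments_bounded :
  forall i, J i -> [/\ `|c i| <= B, `|x i| <= B & `|y i| <= B].

Let cB k : J k -> `|c k| <= B. Proof. by case/moments_bounded. Qed.
Let xB k : J k -> `|x k| <= B. Proof. by case/moments_bounded. Qed.
Let yB k : J k -> `|y k| <= B. Proof. by case/moments_bounded. Qed.

Let halfD_bounded k : J k -> `|(x k + y k) / 2| <= B.
Proof.
move=> Jk; have := xB _ Jk; have := yB _ Jk; rewrite !ler_norml.
by move=> /andP[? ?] /andP[? ?]; apply/andP; split; lra.
Qed.

Let halfB_bounded k : J k -> `|(x k - y k) / 2| <= B.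
Proof.
move=> Jk; have := xB _ Jk; have := yB _ Jk; rewrite !ler_norml.
by move=> /andP[? ?] /andP[? ?]; apply/andP; split; lra.
Qed.

Lemma cross_moment_le m1 m2 i :
  J i -> cross_moment i m1 m2 <= B + `|m2| * B + `|m1| * B + m1 * m2.
Proof.
move=> Ji; rewrite /cross_moment; have := ler_normlW (cB _ Ji).
have : - m2 * x i <= `|m2| * B.
  by apply: le_trans (ler_norm _) _; rewrite normrM normrN ler_wpM2l ?xB.
have : - m1 * y i <= `|m1| * B.
  by apply: le_trans (ler_norm _) _; rewrite normrM normrN ler_wpM2l ?yB.
lra.
Qed.

Lemma le_upper_cross_moment m1 m2 {i} :
  J i -> cross_moment i m1 m2 <= upper_cross_moment m1 m2.
Proof. exact: (le_sup_image (f := cross_moment ^~ m1 ^~ m2) i (cross_moment_le m1 m2)). Qed.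

Lemma upper_cross_moment_le m1 m2 S :
  (forall i, J i -> cross_moment i m1 m2 <= S) -> upper_cross_moment m1 m2 <= S.
Proof. exact: (sup_image_le (f := cross_moment ^~ m1 ^~ m2)). Qed.

Lemma mem_mean_itv_mix {f : I -> R} {M i j l} :
  (forall k, J k -> `|f k| <= M) -> J i -> J j -> 0 <= l <= 1 ->
  l * f i + (1 - l) * f j \in mean_itv f.
Proof.
move=> fM Ji Jj /andP[l0 l1].
have fub k : J k -> f k <= M by move=> /fM; exact: ler_normlW.
have flb k : J k -> - M <= f k by move=> /fM; rewrite ler_norml => /andP[].
have := le_sup_image i fub Ji; have := le_sup_image j fub Jj.
have := inf_image_le i flb Ji; have := inf_image_le j flb Jj.
rewrite /mean_itv in_setE /= in_itv /= => h1 h2 h3 h4; apply/andP; split; nra.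
Qed.

Lemma mean_itv_bounds {f : I -> R} {M i} :
  (forall k, J k -> `|f k| <= M) -> J i -> inf (f @` J) <= f i <= sup (f @` J).
Proof.
move=> fM Ji; have := mem_mean_itv_mix (l := 1) fM Ji Ji.
rewrite ler01 lexx mul1r subrr mul0r addr0 => /(_ isT).
by rewrite /mean_itv in_setE /= in_itv.
Qed.

Lemma mixture_covs_neq0 : mixture_covs !=set0.
Proof.
by case: J0 => i Ji; exists (mixture_cov i i 1), i, i, 1; rewrite ler01 lexx.
Qed.

Lemma mixture_covs_ubound : ubound mixture_covs (B + B * B).
Proof.
move=> _ [i [j [l [Ji Jj hl <-]]]]; rewrite /mixture_cov.
have := ler_norm_mix (cB _ Ji) (cB _ Jj) hl; have := ler_norm_mix (xB _ Ji) (xB _ Jj) hl.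
have := ler_norm_mix (yB _ Ji) (yB _ Jj) hl.
rewrite !ler_norml => /andP[? ?] /andP[? ?] /andP[? ?]; nra.
Qed.

Let sup_mixture_covs_ubound : ubound mixture_covs (sup mixture_covs).
Proof. by apply: ub_le_sup; exists (B + B * B); exact: mixture_covs_ubound. Qed.

Lemma mixture_cov_diag_le S k : ubound mixture_covs S -> J k -> c k - x k * y k <= S.
Proof.
by move=> SU Jk; rewrite -mixture_cov_diag; apply: SU; exists k, k, 1; rewrite ler01 lexx.
Qed.

Lemma cross_moment_pair_le {S i j l m1 m2} :
  ubound mixture_covs S -> J i -> J j -> 0 <= l <= 1 ->
  (l * x i + (1 - l) * x j - m1) * (l * y i + (1 - l) * y j - m2) <= 0 ->
  S < cross_moment i m1 m2 -> cross_moment j m1 m2 <= S.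
Proof.
move=> SU Ji Jj hl hprod Si; rewrite leNgt; apply/negP => Sj.
have : mixture_cov i j l <= S by apply: SU; exists i, j, l.
by have := ltr_mix hl Si Sj; rewrite cross_moment_mix; lra.
Qed.

Lemma mixture_cov_le_upper_value z : mixture_covs z -> (z%:E <= upper_value)%E.
Proof.
move=> [i [j [l [Ji Jj hl <-]]]].
set ym := l * y i + (1 - l) * y j.
have ymM : mean_itv y ym by exact/set_mem/(mem_mean_itv_mix yB).
apply: le_trans (ereal_sup_ubound _); last by exists ym.
apply: le_ereal_inf_tmp => _ [m1 _ <-]; rewrite lee_fin.
have := cross_moment_mix i j l m1 ym; rewrite -/ym subrr mulr0 addr0 => <-.
have := le_upper_cross_moment m1 ym Ji; have := le_upper_cross_moment m1 ym Jj.
by move: hl => /andP[l0 l1]; nra.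
Qed.

Lemma exists_mean_x_le {S} : ubound mixture_covs S -> forall m2,
  exists2 m1, m1 \in mean_itv x & upper_cross_moment m1 m2 <= S.
Proof.
move=> SU m2; set L := inf (x @` J); set H := sup (x @` J).
have xLH k : J k -> L <= x k <= H := mean_itv_bounds xB.
have LH : L <= H by case: J0 => k /xLH /andP[h1 h2]; apply: le_trans h1 h2.
pose d k := y k - m2; pose e k := S - (c k - x k * y k); pose t k := e k / d k.
have e0 k : J k -> 0 <= e k by move=> Jk; rewrite subr_ge0 mixture_cov_diag_le.
have etd k : d k != 0 -> e k = t k * d k by move=> dk; rewrite divfK.
have cmE k m : cross_moment k m m2 = S - e k + (x k - m) * d k.
  by rewrite /cross_moment /e /d; ring.
pose lo k := if 0 < d k then x k - t k else L.
pose hi k := if d k < 0 then x k - t k else H.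
have lo_x_hi k : J k -> lo k <= x k <= hi k.
  move=> Jk; have := e0 k Jk; have := xLH k Jk; rewrite /lo /hi.
  by case: ltgtP => dk /andP[? ?] ?; have := etd k;
    rewrite ?(lt0r_neq0 dk) ?(ltr0_neq0 dk); nra.
have [m1 mLH mlohi] : exists2 m1, L <= m1 <= H & forall k, J k -> lo k <= m1 <= hi k.
  apply: helly_interval => //.
  - by move=> k Jk; have /andP[_ ?] := xLH k Jk; have /andP[? _] := lo_x_hi k Jk; lra.
  - by move=> k Jk; have /andP[? _] := xLH k Jk; have /andP[_ ?] := lo_x_hi k Jk; lra.
  move=> i j Ji Jj; rewrite /lo /hi; case: ifPn => di; case: ifPn => dj //.
  - rewrite leNgt; apply/negP => hlt.
    pose m := (x i - t i + (x j - t j)) / 2.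
    have Si : S < cross_moment i m m2 by rewrite cmE (etd i (lt0r_neq0 di)) /m; nra.
    have Sj : S < cross_moment j m m2 by rewrite cmE (etd j (ltr0_neq0 dj)) /m; nra.
    (* the weight [l] makes the mixed mean of [Y] equal to [m2] *)
    pose l := d j / (d j - d i).
    have hld : l * (d j - d i) = d j.
      by rewrite /l divfK // subr_eq0 lt_eqF // (lt_trans dj di).
    have hl : 0 <= l <= 1 by apply/andP; split; nra.
    have hy : l * y i + (1 - l) * y j - m2 = d j - l * (d j - d i) by rewrite /d; ring.
    rewrite hld subrr in hy.
    suff : cross_moment j m m2 <= S by rewrite leNgt Sj.
    by apply: (cross_moment_pair_le SU Ji Jj hl _ Si); rewrite hy mulr0.
  - by have := lo_x_hi i Ji; rewrite /lo di => /andP[? _]; have /andP[_ ?] := xLH i Ji; lra.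
  - by have := lo_x_hi j Jj; rewrite /hi dj => /andP[_ ?]; have /andP[? _] := xLH j Jj; lra.
exists m1; first by rewrite /mean_itv in_setE /= in_itv.
apply: upper_cross_moment_le => k Jk; rewrite cmE.
have := e0 k Jk; have := mlohi k Jk; rewrite /lo /hi.
by case: ltgtP => dk /andP[? ?] ?; have := etd k;
  rewrite ?(lt0r_neq0 dk) ?(ltr0_neq0 dk) ?dk; nra.
Qed.

Lemma exists_mean_u_le {S} : ubound mixture_covs S -> forall b,
  exists2 a, a \in mean_itv (fun k => (x k + y k) / 2) &
    upper_cross_moment (a + b) (a - b) <= S.
Proof.
move=> SU b; pose u k := (x k + y k) / 2.
set L := inf (u @` J); set H := sup (u @` J).
have uLH k : J k -> L <= u k <= H := mean_itv_bounds halfD_bounded.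
have LH : L <= H by case: J0 => k /uLH /andP[h1 h2]; apply: le_trans h1 h2.
pose e k := S - (c k - x k * y k) + ((x k - y k) / 2 - b) ^+ 2.
have e0 k : J k -> 0 <= e k.
  by move=> Jk; rewrite addr_ge0 ?sqr_ge0 // subr_ge0 mixture_cov_diag_le.
pose r k := Num.sqrt (e k).
have r0 k : 0 <= r k := sqrtr_ge0 _.
have r2 k : J k -> r k ^+ 2 = e k by move=> Jk; rewrite sqr_sqrtr ?e0.
have cmE k a : cross_moment k (a + b) (a - b) = S - e k + (u k - a) ^+ 2.
  by rewrite cross_moment_saddle /e /u; ring.
have [a aLH ar] : exists2 a, L <= a <= H &
    forall k, J k -> u k - r k <= a <= u k + r k.
  apply: helly_interval => //.
  - by move=> k Jk; have := r0 k; have /andP[_ ?] := uLH k Jk; lra.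
  - by move=> k Jk; have := r0 k; have /andP[? _] := uLH k Jk; lra.
  move=> i j Ji Jj; rewrite leNgt; apply/negP => hlt.
  have := r0 i; have := r0 j => rj ri.
  pose m := (u i - r i + (u j + r j)) / 2.
  have Si : S < cross_moment i (m + b) (m - b) by rewrite cmE -(r2 i Ji) /m; nra.
  have Sj : S < cross_moment j (m + b) (m - b) by rewrite cmE -(r2 j Jj) /m; nra.
  (* the weight [l] makes the mixed mean of [(X + Y) / 2] equal to [m] *)
  pose l := (m - u j) / (u i - u j).
  have hld : l * (u i - u j) = m - u j.
    by rewrite /l divfK // subr_eq0 gt_eqF // /m; lra.
  have hl : 0 <= l <= 1 by apply/andP; split; rewrite /m in hld; nra.
  suff : cross_moment j (m + b) (m - b) <= S by rewrite leNgt Sj.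
  apply: (cross_moment_pair_le SU Ji Jj hl _ Si).
  have um : (l * x i + (1 - l) * x j + (l * y i + (1 - l) * y j)) / 2 = m.
    by rewrite -[m](subrK (u j)) -hld /u; field.
  by rewrite saddle_identity um subrr expr0n sub0r oppr_le0 sqr_ge0.
exists a; first by rewrite /mean_itv in_setE /= in_itv.
apply: upper_cross_moment_le => k Jk; rewrite cmE -(r2 k Jk).
by have := r0 k; have /andP[? ?] := ar k Jk; nra.
Qed.

Lemma upper_valueE : upper_value = (sup mixture_covs)%:E.
Proof.
apply/le_anti/andP; split.
  apply: ge_ereal_sup => _ [m2 _ <-].
  have [m1 m1M le_m1] := exists_mean_x_le sup_mixture_covs_ubound m2.
  apply: ge_ereal_inf; exists (upper_cross_moment m1 m2)%:E; last by rewrite lee_fin.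
  by exists m1 => //; exact: set_mem.
rewrite -ereal_sup_EFin.
- by apply: ge_ereal_sup => _ [z hz <-]; exact: mixture_cov_le_upper_value.
- by exists (B + B * B); exact: mixture_covs_ubound.
- exact: mixture_covs_neq0.
Qed.

Lemma upper_cross_moment_lbound b :
  exists M, forall a, M <= upper_cross_moment (a + b) (a - b).
Proof.
case: J0 => i Ji; exists (c i - x i * y i - ((x i - y i) / 2 - b) ^+ 2) => a.
apply: le_trans (le_upper_cross_moment _ _ Ji); rewrite cross_moment_saddle.
by have := sqr_ge0 ((x i + y i) / 2 - a); lra.
Qed.

Lemma saddle_inf_le b a : saddle_inf b <= upper_cross_moment (a + b) (a - b).
Proof.
have [M hM] := upper_cross_moment_lbound b.
by apply: (inf_image_le (f := fun a => upper_cross_moment (a + b) (a - b)) a).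
Qed.

Lemma le_saddle_inf M b :
  (forall a, M <= upper_cross_moment (a + b) (a - b)) -> M <= saddle_inf b.
Proof.
move=> hM; apply: (le_inf_image (f := fun a => upper_cross_moment (a + b) (a - b))).
  by exists 0.
by move=> a _; exact: hM.
Qed.

Lemma mixture_cov_le_saddle_inf {i j l} : J i -> J j -> 0 <= l <= 1 ->
  mixture_cov i j l <=
    saddle_inf ((l * x i + (1 - l) * x j - (l * y i + (1 - l) * y j)) / 2).
Proof.
move=> Ji Jj hl; apply: le_saddle_inf => a; set b := (_ - _) / 2.
set um := (l * x i + (1 - l) * x j + (l * y i + (1 - l) * y j)) / 2.
have := cross_moment_mix i j l (a + b) (a - b).
rewrite saddle_identity -/um (_ : (_ - _) / 2 = b) // subrr expr0n subr0.
have := sqr_ge0 (um - a).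
have := le_upper_cross_moment (a + b) (a - b) Ji.
have := le_upper_cross_moment (a + b) (a - b) Jj.
by move: hl => /andP[l0 l1]; nra.
Qed.

Lemma saddle_inf_lipschitz b b' :
  saddle_inf b <= saddle_inf b' + `|b - b'| * (2 * B + `|b| + `|b'|).
Proof.
set K := _ * _; rewrite -lerBlDr; apply: le_saddle_inf => a; rewrite lerBlDr.
apply: le_trans (saddle_inf_le b a) _; apply: upper_cross_moment_le => k Jk.
apply: le_trans (lerD (le_upper_cross_moment (a + b') (a - b') Jk) (lexx K)).
rewrite !cross_moment_saddle; set v := (x k - y k) / 2.
suff : (v - b') ^+ 2 - (v - b) ^+ 2 <= K by lra.
have -> : (v - b') ^+ 2 - (v - b) ^+ 2 = (b - b') * (2 * v - b - b') by ring.
apply: le_trans (ler_norm _) _; rewrite normrM /K ler_wpM2l //.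
apply: le_trans (ler_normB _ _) _; rewrite lerD //.
apply: le_trans (ler_normB _ _) _; rewrite lerD //.
by rewrite normrM ger0_norm // ler_pM2l // halfB_bounded.
Qed.

Lemma continuous_saddle_inf : continuous saddle_inf.
Proof.
move=> b0; apply: (@lipschitz_bound_continuous_at _ _ (fun t => 2 * B + `|b0| + `|t|)).
  move=> t; rewrite ler_norml; apply/andP; split.
    by have := saddle_inf_lipschitz b0 t; rewrite distrC; lra.
  by have := saddle_inf_lipschitz t b0; rewrite [_ + `|t| + _]addrAC; lra.
by apply: continuousD; [exact: cst_continuous | exact: norm_continuous].
Qed.

Lemma sup_mixture_covs_le_saddle_inf :
  exists2 b, b \in mean_itv (fun k => (x k - y k) / 2) &
    sup mixture_covs <= saddle_inf b.
Proof.
pose v k := (x k - y k) / 2.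
have LH : inf (v @` J) <= sup (v @` J).
  by case: J0 => k /(mean_itv_bounds halfB_bounded) /andP[h1 h2]; apply: le_trans h1 h2.
have [b bM bmax] := EVT_max LH (continuous_subspaceT continuous_saddle_inf).
exists b; first by rewrite /mean_itv in_setE.
apply: ge_sup; first exact: mixture_covs_neq0.
move=> _ [i [j [l [Ji Jj hl <-]]]].
apply: le_trans (mixture_cov_le_saddle_inf Ji Jj hl) (bmax _ _).
have := mem_mean_itv_mix halfB_bounded Ji Jj hl; rewrite /mean_itv in_setE /=.
suff -> : (l * x i + (1 - l) * x j - (l * y i + (1 - l) * y j)) / 2 =
  l * v i + (1 - l) * v j by [].
by rewrite /v; field.
Qed.

Lemma saddle_valueE : saddle_value = (sup mixture_covs)%:E.
Proof.
apply/le_anti/andP; split.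
  apply: ge_ereal_sup => _ [b _ <-].
  have [a _ aS] := exists_mean_u_le sup_mixture_covs_ubound b.
  apply: ge_ereal_inf; exists (upper_cross_moment (a + b) (a - b))%:E; last by rewrite lee_fin.
  by exists a.
have [b _ Sb] := sup_mixture_covs_le_saddle_inf.
apply: le_trans (ereal_sup_ubound _); last by exists b.
by apply: le_ereal_inf_tmp => _ [a _ <-]; rewrite lee_fin (le_trans Sb) ?saddle_inf_le.
Qed.

Lemma saddle_point : exists a b, [/\ a \in mean_itv (fun k => (x k + y k) / 2),
  b \in mean_itv (fun k => (x k - y k) / 2) &
  upper_cross_moment (a + b) (a - b) = sup mixture_covs].
Proof.
have [b bM Sb] := sup_mixture_covs_le_saddle_inf.
have [a aM aS] := exists_mean_u_le sup_mixture_covs_ubound b.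
by exists a, b; split => //; apply/le_anti; rewrite aS (le_trans Sb) ?saddle_inf_le.
Qed.

End mixture_minimax.

Arguments cross_moment_le {R I J c x y B}.
Arguments upper_valueE {R I J c x y B}.
Arguments saddle_valueE {R I J c x y B}.
Arguments saddle_point {R I J c x y B}.

Lemma le_Lfun1 {d} {T : measurableType d} {R : realType} {mu : {measure set T -> \bar R}}
    {f g : T -> R} :
  measurable_fun setT f -> g \in Lfun mu 1 -> (forall t, `|f t| <= g t) ->
  f \in Lfun mu 1.
Proof.
move=> mf /Lfun1_integrable g1 fg; apply/Lfun1_integrable.
apply: le_integrable g1 => //; first exact/measurable_EFinP.
by move=> t _; rewrite /= lee_fin (le_trans (fg t)) // ler_norm.
Qed.

Section expectation_bounds.
Context {d} {T : measurableType d} {R : realType} {P : probability T R}.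

Lemma Lfun1_sqr {X : T -> R} : measurable_fun setT X ->
  ('E_P[fun t => (X t ^+ 2)%R] < +oo)%E -> (fun t => X t ^+ 2) \in Lfun P 1.
Proof.
move=> mX; rewrite unlock => X2; apply/Lfun1_integrable/integrableP; split.
  by apply/measurable_EFinP; exact: measurable_funX.
rewrite (eq_integral (fun t => (X t ^+ 2)%:E)) // => t _.
by rewrite /= ger0_norm ?sqr_ge0.
Qed.

Lemma abs_fine_expectation_le {f g : T -> R} : f \in Lfun P 1 -> g \in Lfun P 1 ->
  (forall t, `|f t| <= g t) -> `|fine 'E_P[f]| <= fine 'E_P[g].
Proof.
move=> f1 g1 fg; have Ef := fineK (expectation_fin_num f1).
have Eg := fineK (expectation_fin_num g1).
have : (0 <= 'E_P[g \- f])%E.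
  by apply: expectation_ge0 => t; rewrite subr_ge0 (le_trans (ler_norm _)).
have : (0 <= 'E_P[g \+ f])%E.
  apply: expectation_ge0 => t; rewrite -lerBlDr sub0r.
  by apply: le_trans (fg t); rewrite -normrN ler_norm.
rewrite expectationB // expectationD // -Ef -Eg -EFinD -EFinB !lee_fin.
by rewrite ler_norml; lra.
Qed.

End expectation_bounds.

(* [fine] maps an infinite expectation to [0]; only integrable [f] occur below. *)
Definition rmean {d} {T : measurableType d} {R : realType} (f : T -> R)
  (P : probability T R) : R := fine 'E_P[f].

Section second_moments.
Context {d} {T : measurableType d} {R : realType} {P : probability T R} {X Y : T -> R}.
Hypotheses (mX : measurable_fun setT X) (mY : measurable_fun setT Y).
Hypotheses (X2 : ('E_P[fun t => (X t ^+ 2)%R] < +oo)%E)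
  (Y2 : ('E_P[fun t => (Y t ^+ 2)%R] < +oo)%E).

Let dom t := 1 + X t ^+ 2 + Y t ^+ 2.

Let Lfun1_dom : dom \in Lfun P 1.
Proof. by rewrite !rpredD ?Lfun_cst ?Lfun1_sqr. Qed.

Let dom_X t : `|X t| <= dom t.
Proof.
have := sqr_ge0 (X t - 1); have := sqr_ge0 (X t + 1); have := sqr_ge0 (Y t).
by rewrite /dom ler_norml => ? ? ?; apply/andP; split; nra.
Qed.

Let dom_Y t : `|Y t| <= dom t.
Proof.
have := sqr_ge0 (Y t - 1); have := sqr_ge0 (Y t + 1); have := sqr_ge0 (X t).
by rewrite /dom ler_norml => ? ? ?; apply/andP; split; nra.
Qed.

Let dom_XY t : `|X t * Y t| <= dom t.
Proof.
have := sqr_ge0 (X t - Y t); have := sqr_ge0 (X t + Y t).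
by rewrite /dom ler_norml => ? ?; apply/andP; split; nra.
Qed.

Lemma Lfun1_moments :
  [/\ X \in Lfun P 1, Y \in Lfun P 1 & (fun t => X t * Y t) \in Lfun P 1].
Proof.
split; [exact: le_Lfun1 mX Lfun1_dom dom_X | exact: le_Lfun1 mY Lfun1_dom dom_Y |].
exact: le_Lfun1 (measurable_funM mX mY) Lfun1_dom dom_XY.
Qed.

Lemma expectation_bilinear (F : T -> R) a0 a1 a2 a3 :
  (forall t, F t = a0 + a1 * X t + a2 * Y t + a3 * (X t * Y t)) ->
  ('E_P[F] = (a0 + a1 * rmean X P + a2 * rmean Y P +
              a3 * rmean (fun t => X t * Y t) P)%:E)%E.
Proof.
move=> /funext ->; have [X1 Y1 XY1] := Lfun1_moments.
have -> : (fun t => a0 + a1 * X t + a2 * Y t + a3 * (X t * Y t)) =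
    cst a0 \+ a1 \o* X \+ a2 \o* Y \+ a3 \o* (X \* Y).
  by apply/funext => t /=; ring.
rewrite !expectationD ?rpredD ?Lfun_cst ?Lfun_scale // !expectationZl // expectation_cst.
rewrite -(fineK (expectation_fin_num X1)) -(fineK (expectation_fin_num Y1)).
by rewrite -(fineK (expectation_fin_num XY1)) -!EFinM -!EFinD.
Qed.

Lemma moments_le_second_moments :
  let B := 1 + rmean (fun t => X t ^+ 2) P + rmean (fun t => Y t ^+ 2) P in
  [/\ `|rmean (fun t => X t * Y t) P| <= B, `|rmean X P| <= B & `|rmean Y P| <= B].
Proof.
have [X1 Y1 XY1] := Lfun1_moments.
have -> : 1 + rmean (fun t => X t ^+ 2) P + rmean (fun t => Y t ^+ 2) P = rmean dom P.
  have X21 := Lfun1_sqr mX X2; have Y21 := Lfun1_sqr mY Y2.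
  rewrite /rmean (_ : dom = cst 1 \+ (fun t => X t ^+ 2) \+ (fun t => Y t ^+ 2)) //.
  rewrite !expectationD ?rpredD ?Lfun_cst // expectation_cst.
  rewrite -(fineK (expectation_fin_num X21)) -(fineK (expectation_fin_num Y21)).
  by rewrite -!EFinD.
split; [exact: abs_fine_expectation_le XY1 Lfun1_dom dom_XY |
  exact: abs_fine_expectation_le X1 Lfun1_dom dom_X |
  exact: abs_fine_expectation_le Y1 Lfun1_dom dom_Y].
Qed.

End second_moments.

Lemma oppe_sup_inf {R : realType} {I K : Type} (F : I -> K -> \bar R)
    (A : set I) (B : set K) :
  (- ereal_sup [set ereal_inf [set F a b | a in A] | b in B])%E =
  ereal_inf [set ereal_sup [set (- F a b)%E | a in A] | b in B].
Proof.
rewrite -ereal_infN image_comp; congr ereal_inf; apply: eq_imagel => b _ /=.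
by rewrite -ereal_supN image_comp.
Qed.

Lemma image_setT_oppr {R : zmodType} {V : Type} (G : R -> V) :
  [set G a | a in [set: R]] = [set G (- a) | a in [set: R]].
Proof. by apply/seteqP; split => _ [a _ <-]; exists (- a) => //; rewrite opprK. Qed.

Section sublinear_expectation.
Context {d} {T : measurableType d} {R : realType} {Ps : set (probability T R)}.

Lemma sublinE_EFin (Z : T -> R) (z : probability T R -> R) M : Ps !=set0 ->
  (forall P, Ps P -> 'E_P[Z]%E = (z P)%:E) -> (forall P, Ps P -> z P <= M) ->
  sublinE Ps Z = (sup (z @` Ps))%:E.
Proof.
move=> Ps0 EZ zM; rewrite /sublinE -ereal_sup_EFin.
- by rewrite image_comp; congr ereal_sup; apply: eq_imagel.
- by exists M => _ [P ? <-]; exact: zM.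
- by case: Ps0 => P ?; exists (z P), P.
Qed.

Lemma meansetE (W : T -> R) (w : probability T R -> R) M : Ps !=set0 ->
  (forall P, Ps P ->
    'E_P[W]%E = (w P)%:E /\ 'E_P[fun t => (- W t)%R]%E = (- w P)%:E) ->
  (forall P, Ps P -> `|w P| <= M) -> meanset Ps W = mean_itv Ps w.
Proof.
move=> Ps0 EW wM; rewrite /meanset /lowmean /upmean /mean_itv.
rewrite (sublinE_EFin W w M Ps0) => [|P /EW[]//|P /wM/ler_normlW//].
rewrite (sublinE_EFin (fun t => - W t) (fun P => - w P) M Ps0) => [|P /EW[]//|].
  by rewrite /inf image_comp.
by move=> P /wM; rewrite -normrN => /ler_normlW.
Qed.

Lemma meansetN (W W' : T -> R) :
  W' =1 (fun t => - W t) -> meanset Ps W' = -%R @` meanset Ps W.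
Proof.
move=> /funext ->; rewrite /meanset /lowmean /upmean opp_itv_bnd_bnd /= opprK.
by rewrite (_ : (fun t => - - W t) = W) //; apply/funext => t; rewrite opprK.
Qed.

Lemma lowcov_upcovN (X Y : T -> R) :
  lowcov Ps X Y = (- upcov Ps (fun t => (- X t)%R) Y)%E.
Proof.
rewrite /upcov (meansetN X (fun t => - X t)) // oppe_sup_inf.
congr ereal_inf; apply: eq_imagel => m2 _.
rewrite image_comp; congr ereal_sup; apply: eq_imagel => m1 _ /=.
by congr (- sublinE Ps _)%E; apply/funext => t; ring.
Qed.

End sublinear_expectation.

Section upper_covariance.
Context {d} {T : measurableType d} {R : realType} {Ps : set (probability T R)}.
Context {X Y : T -> R}.
Hypotheses (Ps0 : Ps !=set0) (mX : measurable_fun setT X) (mY : measurable_fun setT Y).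
Hypothesis second_moments_fin :
  (sublinE Ps (fun t => (X t ^+ 2)%R) + sublinE Ps (fun t => (Y t ^+ 2)%R) < +oo)%E.

Let s2 := (sublinE Ps (fun t => (X t ^+ 2)%R) + sublinE Ps (fun t => (Y t ^+ 2)%R))%E.

Let second_moments_le {P} : Ps P ->
  ('E_P[fun t => (X t ^+ 2)%R] + 'E_P[fun t => (Y t ^+ 2)%R] <= s2)%E.
Proof. by move=> PP; apply: leeD; apply: ereal_sup_ubound; exists P. Qed.

Let second_moments_lt {P} : Ps P ->
  ('E_P[fun t => (X t ^+ 2)%R] < +oo)%E /\ ('E_P[fun t => (Y t ^+ 2)%R] < +oo)%E.
Proof.
move=> /second_moments_le/le_lt_trans/(_ second_moments_fin) lt_oo.
by split; apply: le_lt_trans lt_oo; [apply: leeDl | apply: leeDr];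
  apply: expectation_ge0 => t; exact: sqr_ge0.
Qed.

Lemma moments_bounded : exists B, forall P, Ps P -> [/\
  `|rmean (fun t => X t * Y t) P| <= B, `|rmean X P| <= B & `|rmean Y P| <= B].
Proof.
exists (1 + fine s2) => P PP; have [X2 Y2] := second_moments_lt PP.
have [] := moments_le_second_moments mX mY X2 Y2.
suff : rmean (fun t => X t ^+ 2) P + rmean (fun t => Y t ^+ 2) P <= fine s2.
  by move=> ? ? ? ?; split; lra.
have fin2 Z : ('E_P[fun t => (Z t ^+ 2)%R] < +oo ->
    'E_P[fun t => (Z t ^+ 2)%R] \is a fin_num)%E.
  by rewrite ge0_fin_numE //; apply: expectation_ge0 => t; exact: sqr_ge0.
have E2_fin : ('E_P[fun t => (X t ^+ 2)%R] + 'E_P[fun t => (Y t ^+ 2)%R]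
    \is a fin_num)%E by rewrite fin_numD !fin2.
rewrite /rmean -fineD ?fin2 //; apply: fine_le (second_moments_le PP) => //.
rewrite fin_numE -ltey second_moments_fin andbT -ltNye.
by apply: lt_le_trans (second_moments_le PP); move: E2_fin; rewrite fin_numElt => /andP[].
Qed.

Lemma sublinE_cross_moment m1 m2 :
  sublinE Ps (fun t => (X t - m1) * (Y t - m2)) =
  (upper_cross_moment Ps (rmean (fun t => X t * Y t)) (rmean X) (rmean Y) m1 m2)%:E.
Proof.
have [B hB] := moments_bounded.
apply: (sublinE_EFin _ _ (B + `|m2| * B + `|m1| * B + m1 * m2) Ps0) => P PP.
  have [X2 Y2] := second_moments_lt PP.
  rewrite (expectation_bilinear mX mY X2 Y2 _ (m1 * m2) (- m2) (- m1) 1) => [|t].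
    by rewrite /cross_moment; congr _%:E; ring.
  by ring.
exact: (cross_moment_le hB _ _ _ PP).
Qed.

Lemma meanset_affine (W : T -> R) (w : probability T R -> R) a b :
  (forall t, W t = a * X t + b * Y t) ->
  (forall P, w P = a * rmean X P + b * rmean Y P) ->
  meanset Ps W = mean_itv Ps w.
Proof.
move=> hW hw; have [B hB] := moments_bounded.
apply: (meansetE _ _ (`|a| * B + `|b| * B) Ps0) => P PP.
  have [X2 Y2] := second_moments_lt PP.
  rewrite (expectation_bilinear mX mY X2 Y2 _ 0 a b 0) => [|t]; last by rewrite hW; ring.
  rewrite (expectation_bilinear mX mY X2 Y2 _ 0 (- a) (- b) 0) => [|t].
    by split; congr _%:E; rewrite hw; ring.
  by rewrite hW; ring.
have [_ xB yB] := hB P PP; rewrite hw (le_trans (ler_normD _ _)) // !normrM.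
by rewrite lerD // ler_wpM2l.
Qed.

Theorem upcov_saddle :
  upcov Ps X Y = ereal_sup [set ereal_inf [set sublinE Ps
      (fun t => ((X t + Y t) / 2 - a) ^+ 2 - ((X t - Y t) / 2 - b) ^+ 2)
    | a in [set: R]] | b in [set: R]] /\
  exists a b, [/\ a \in meanset Ps (fun t => (X t + Y t) / 2),
    b \in meanset Ps (fun t => (X t - Y t) / 2) &
    upcov Ps X Y = sublinE Ps
      (fun t => ((X t + Y t) / 2 - a) ^+ 2 - ((X t - Y t) / 2 - b) ^+ 2)].
Proof.
have [B hB] := moments_bounded.
have saddleE a b : sublinE Ps
    (fun t => ((X t + Y t) / 2 - a) ^+ 2 - ((X t - Y t) / 2 - b) ^+ 2) =
    (upper_cross_moment Ps (rmean (fun t => X t * Y t)) (rmean X) (rmean Y)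
      (a + b) (a - b))%:E.
  by rewrite -sublinE_cross_moment; congr sublinE; apply/funext => t; field.
have upE : upcov Ps X Y =
    (sup (mixture_covs Ps (rmean (fun t => X t * Y t)) (rmean X) (rmean Y)))%:E.
  rewrite -(upper_valueE Ps0 hB) /upcov.
  rewrite (meanset_affine X (rmean X) 1 0) => [| t | P]; [| ring | ring].
  rewrite (meanset_affine Y (rmean Y) 0 1) => [| t | P]; [| ring | ring].
  congr ereal_sup; apply: eq_imagel => m2 _.
  by congr ereal_inf; apply: eq_imagel => m1 _; exact: sublinE_cross_moment.
split.
  rewrite upE -(saddle_valueE Ps0 hB); congr ereal_sup; apply: eq_imagel => b _.
  by congr ereal_inf; apply: eq_imagel => a _; rewrite saddleE.
have [a [b [aM bM abE]]] := saddle_point Ps0 hB.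
exists a, b; rewrite upE saddleE abE; split => //.
  by rewrite (meanset_affine _ (fun P => (rmean X P + rmean Y P) / 2) 2^-1 2^-1)
    => // [t|P]; ring.
by rewrite (meanset_affine _ (fun P => (rmean X P - rmean Y P) / 2) 2^-1 (- 2^-1))
  => // [t|P]; ring.
Qed.

End upper_covariance.

Theorem lemma3p14 (d : measure_display) (T : measurableType d) (R : realType)
  (Ps : set (probability T R)) (X Y : T -> R) :
  Ps !=set0 ->
  measurable_fun setT X -> measurable_fun setT Y ->
  (sublinE Ps (fun w => (X w ^+ 2)%R) + sublinE Ps (fun w => (Y w ^+ 2)%R) < +oo)%E ->
  let U := fun w => (X w + Y w) / 2 in
  let V := fun w => (X w - Y w) / 2 in
  (upcov Ps X Y =
     ereal_sup [set ereal_inf [set sublinE Ps (fun w => (U w - a) ^+ 2 - (V w - b) ^+ 2)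
                              | a in [set: R]]
               | b in [set: R]]
   /\ exists a b, a \in meanset Ps U /\ b \in meanset Ps V /\
       upcov Ps X Y = sublinE Ps (fun w => (U w - a) ^+ 2 - (V w - b) ^+ 2))
  /\
  (lowcov Ps X Y =
     ereal_inf [set ereal_sup [set (- sublinE Ps (fun w => (- (U w - a) ^+ 2 + (V w - b) ^+ 2)%R))%E
                              | b in [set: R]]
               | a in [set: R]]
   /\ exists a b, a \in meanset Ps U /\ b \in meanset Ps V /\
       lowcov Ps X Y = (- sublinE Ps (fun w => (- (U w - a) ^+ 2 + (V w - b) ^+ 2)%R))%E).
Proof.
move=> Ps0 mX mY fin2 U V.
have [upE [a [b [aM bM abE]]]] := upcov_saddle Ps0 mX mY fin2.
have fin2N : (sublinE Ps (fun w => ((- X w) ^+ 2)%R) +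
    sublinE Ps (fun w => (Y w ^+ 2)%R) < +oo)%E by under eq_fun do rewrite sqrrN.
(* for (-X, Y) the roles of U and V become those of -V and -U *)
have [lowE [a' [b' [aM' bM' abE']]]] := upcov_saddle Ps0 (measurable_funN mX) mY fin2N.
split; first by split => //; exists a, b.
rewrite lowcov_upcovN; split.
  rewrite lowE oppe_sup_inf image_setT_oppr; congr ereal_inf; apply: eq_imagel => a'' _.
  rewrite image_setT_oppr; congr ereal_sup; apply: eq_imagel => b'' _.
  by congr (- sublinE Ps _)%E; apply/funext => w; rewrite /U /V /=; field.
exists (- b'), (- a'); split; [|split].
- move: bM'; rewrite (meansetN U) => [|t]; last by rewrite /U /=; field.
  by rewrite inE => -[m mM <-]; rewrite opprK inE.
- move: aM'; rewrite (meansetN V) => [|t]; last by rewrite /V /=; field.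
  by rewrite inE => -[m mM <-]; rewrite opprK inE.
by rewrite abE'; congr (- sublinE Ps _)%E; apply/funext => w; rewrite /U /V /=; field.
Qed.
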